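(* Let $q$ be an odd prime power, $\mathbb F_q$ the finite field of order $q$, $d$ a positive integer, and $A\subset \mathbb F_q^d$. Let $\mathcal{SQ}(A)$ be the number of pairs $(x,y)\in A\times A$ such that $\eta(\|x-y\|)=1$. \begin{enumerate} \item If $d\equiv 2\pmod 4$ and $q\equiv 3\pmod 4$, then $$\mathcal{SQ}(A)\le \frac{|A|^2}{2} + \frac{q^{\frac{d}{2}} |A|}{2} -\frac{|A|^2}{2q}- \frac{q^{\frac{d-2}{2}}|A|}{2}.$$ \item Let $d\equiv 0\pmod 4$, or $d\equiv 2\pmod 4$ and $q\equiv 1\pmod 4$. If $|A|\ge (q^{d/2}+q)/(1+q^{-(d-2)/2})$, then $$\mathcal{SQ}(A)\le \frac{|A|^2}{2} + \frac{q^{\frac{d}{2}} |A|}{2}-\frac{|A|^2}{q^{\frac{d}{2}}} -\frac{|A|^2}{2q}+ \frac{q^{\frac{d-2}{2}}|A|}{2}.$$ If $|A|\le (q^{d/2}+q)/(1+q^{-(d-2)/2})$, then $$\mathcal{SQ}(A) \le \frac{|A|^2}{2} + \frac{q^{\frac{d}{2}} |A|}{2} - \frac{|A|^2}{2 q^{\frac{d}{2}}} -\frac{|A|}{2}.$$ \end{enumerate}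
   Context: For $x,y\in\mathbb F_q^d$, $\|x-y\|:=(x_1-y_1)^2+\cdots+(x_d-y_d)^2\in\mathbb F_q$. $\eta$ denotes the quadratic character of $\mathbb F_q$ (so $\eta(a)=1$ if $a$ is a nonzero square, $\eta(a)=-1$ if $a$ is a non-square) with the convention $\eta(0)=0$. *)

From HB Require Import structures.
From mathcomp Require Import all_boot all_order all_algebra all_field.
Set Implicit Arguments. Unset Strict Implicit. Unset Printing Implicit Defensive.
Import Order.TTheory GRing.Theory Num.Theory.
Local Open Scope ring_scope.

Definition eta (F : finFieldType) (a : F) : int :=
  if a == 0 then 0 else if [exists b : F, b ^+ 2 == a] then 1 else -1.

Definition qdist (F : finFieldType) (d : nat) (x y : 'rV[F]_d) : F :=
  \sum_(i < d) (x 0 i - y 0 i) ^+ 2.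

Definition SQ (F : finFieldType) (d : nat) (A : {set 'rV[F]_d}) : nat :=
  #|[set p : 'rV[F]_d * 'rV[F]_d |
      [&& p.1 \in A, p.2 \in A & eta (qdist p.1 p.2) == 1]]|.

(* Fix a nontrivial additive character psi of F and the quadratic
   Gauss sum G = sum_a eta(a) psi(a), so that G^2 = eta(-1) q.  Completing the
   square coordinatewise evaluates sum_m psi(r ||m|| + m.v), and Fourier
   inversion in the distance turns a pair sum sum_{x,y in A} f(||x - y||) into
   sum_m f^(m) |A^(m)|^2, with G^d = eta(-1)^(d/2) q^(d/2) in front.  For the
   weight f(t) = 1 + q (eta(t) - [t = 0]) = 2q [eta(t) = 1] - (q - 1) one gets
   f^(m) = f(-||m||), which expresses 2 q^(d/2+1) SQ(A) exactly; the sign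
   eta(-1)^(d/2) is -1 exactly when d = 2 and q = 3 (mod 4).  Bounding the
   weight pointwise and using Plancherel (sum_m |A^(m)|^2 = q^d |A|,
   |A^(0)|^2 = |A|^2) gives the first two estimates; the last one uses the
   pair sum of eta alone together with the diagonal pairs x = y. *)

From Pilot Require Import Defs.
From HB Require Import structures.
From mathcomp Require Import all_boot all_order all_algebra all_field.
From mathcomp Require Import cyclic zify ring.
Import Defs.  (* HB.structures also exports an [eta] *)
Set Implicit Arguments. Unset Strict Implicit. Unset Printing Implicit Defensive.
Import Order.TTheory GRing.Theory Num.Theory.
Local Open Scope ring_scope.

Lemma expn_even_half (m n : nat) : ~~ odd n -> (m ^ n = (m ^ n./2) ^ 2)%N.
Proof.
by move=> n_even; rewrite -expnM muln2 -{1}[n]odd_double_half (negbTE n_even).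
Qed.

Lemma sum_setX_diag (T : finType) (R : ringType) (A : {set T}) (c : R) :
  \sum_(p in setX A A) (p.1 == p.2)%:R * c = #|A|%:R * c.
Proof.
rewrite (eq_bigl (fun p => (p.1 \in A) && (p.2 \in A))) => [|p]; last by rewrite inE.
rewrite -(pair_big (mem A) (mem A) (fun x y => (x == y)%:R * c)) /=.
rewrite mulr_natl -sumr_const; apply: eq_bigr => x xA.
rewrite (bigD1 x) //= eqxx mul1r big1 ?addr0 // => y /andP[_ /negbTE].
by rewrite eq_sym => ->; rewrite mul0r.
Qed.

Section QuadraticCharacter.
Variable F : finFieldType.
Hypothesis oddF : odd #|F|.

Lemma card_finField_gt1 : (1 < #|F|)%N.
Proof. exact: finNzRing_gt1. Qed.

Lemma natr2_neq0 : (2%:R : F) != 0.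
Proof.
apply/eqP => two0; have [p p_pr pchar_p] := finPcharP F.
have : (2 \in [pchar F])%N by rewrite inE /= two0 eqxx.
rewrite (pcharf_eq pchar_p) inE => /eqP p2; subst p.
have cardF : #|F| = (2 ^ logn 2 #|F|)%N := card_pprimeChar pchar_p.
by move: oddF card_finField_gt1; rewrite cardF oddX orbF => /eqP->.
Qed.

Lemma oppr1_neq1 : (-1 : F) != 1.
Proof. by rewrite eq_sym -addr_eq0; exact: natr2_neq0. Qed.

Lemma expf_card_pred (x : F) : x != 0 -> x ^+ #|F|.-1 = 1.
Proof.
move=> x_nz; apply: (mulIf x_nz); rewrite mul1r -exprSr prednK ?expf_card //.
exact: ltnW card_finField_gt1.
Qed.

Lemma finField_prim_root : exists z : F, (#|F|.-1).-primitive_root z.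
Proof.
have q1_gt0 : (0 < #|F|.-1)%N by have := card_finField_gt1; lia.
have : has (#|F|.-1).-primitive_root (enum (predC1 (0 : F))).
  apply: has_prim_root => //; last by rewrite -cardE cardC1.
    by apply/allP => x; rewrite mem_enum unity_rootE => /expf_card_pred ->.
  exact: enum_uniq.
by case/hasP => z _ z_prim; exists z.
Qed.

Lemma eta0 : eta (0 : F) = 0.
Proof. by rewrite /eta eqxx. Qed.

Lemma eta_pm1 (a : F) : a != 0 -> eta a = 1 \/ eta a = -1.
Proof. by rewrite /eta => /negbTE ->; case: ifP; [left | right]. Qed.

Lemma eta_range (a : F) : -1 <= eta a <= 1.
Proof. by have [->|/eta_pm1[]->] := eqVneq a 0; rewrite ?eta0. Qed.

Lemma eta_sqr (a : F) : a != 0 -> eta (a ^+ 2) = 1.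
Proof.
move=> a_nz; rewrite /eta sqrf_eq0 (negbTE a_nz).
by case: existsP => // [[]]; exists a.
Qed.

Lemma eta1 : eta (1 : F) = 1.
Proof. by have := eta_sqr (oner_neq0 F); rewrite expr1n. Qed.

Lemma eta_exp_even (a : F) n : a != 0 -> ~~ odd n -> eta a ^+ n = 1.
Proof.
move=> a_nz n_even; rewrite -[n]odd_double_half (negbTE n_even) add0n -mul2n exprM.
by case: (eta_pm1 a_nz) => ->; rewrite ?sqrrN !expr1n.
Qed.

Lemma natr4_neq0 : (4%:R : F) != 0.
Proof. by rewrite (natrM _ 2 2) mulf_neq0 ?natr2_neq0. Qed.

Lemma eta_natr4 : eta (4%:R : F) = 1.
Proof. by rewrite (natrM _ 2 2) -expr2 eta_sqr ?natr2_neq0. Qed.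

(* Euler's criterion: writing a = z ^+ i for a generator z of F^*, a is a
   square iff i is even, and a ^+ (q-1)/2 = (-1) ^+ i. *)
Lemma eta_euler (a : F) : a != 0 -> a ^+ (#|F|.-1)./2 = (eta a)%:~R.
Proof.
move=> a_nz; have [z z_prim] := finField_prim_root.
have [i def_a] := prim_rootP z_prim (expf_card_pred a_nz).
have k2 : ((#|F|.-1)./2 * 2 = #|F|.-1)%N by move: oddF card_finField_gt1; lia.
have zk : z ^+ (#|F|.-1)./2 = -1.
  have /eqP := prim_expr_order z_prim; rewrite -{1}k2 exprM sqrf_eq1.
  case/orP=> [|/eqP//]; rewrite -[X in _ == X](expr0 z) (eq_prim_root_expr z_prim).
  by rewrite mod0n modn_small; move: oddF card_finField_gt1; lia.
have a_k : a ^+ (#|F|.-1)./2 = (-1) ^+ odd i.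
  by rewrite def_a -exprM mulnC exprM zk signr_odd.
rewrite /eta (negbTE a_nz) a_k; case: existsP => [[b /eqP b2] | not_sq].
  case: (boolP (odd i)) => // odd_i; move: a_k.
  have b_nz : b != 0 by apply: contraNneq a_nz => b0; rewrite -b2 b0 expr0n.
  rewrite odd_i -b2 -exprM mulnC k2.
  by rewrite expf_card_pred // => /esym/eqP; rewrite (negbTE oppr1_neq1).
case: (boolP (odd i)) => [_ | even_i]; first by rewrite expr1.
case: not_sq; exists (z ^+ i./2); rewrite def_a -exprM muln2.
by rewrite -[X in _ == z ^+ X]odd_double_half (negbTE even_i).
Qed.

Lemma eta_eulerP (a : F) (u : int) :
  a != 0 -> u ^+ 2 = 1 -> a ^+ (#|F|.-1)./2 = u%:~R -> eta a = u.
Proof.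
move=> a_nz /eqP; rewrite sqrf_eq1 => u_pm1; rewrite eta_euler // => /eqP.
have := oppr1_neq1; case: (eta_pm1 a_nz) => ->; case/orP: u_pm1 => /eqP->;
  by rewrite ?rmorphN1 ?rmorph1 // eq_sym => /negbTE->.
Qed.

Lemma eta_mul (a b : F) : eta (a * b) = eta a * eta b.
Proof.
have [->|a_nz] := eqVneq a 0; first by rewrite mul0r eta0 mul0r.
have [->|b_nz] := eqVneq b 0; first by rewrite mulr0 eta0 mulr0.
apply: eta_eulerP; first exact: mulf_neq0.
  by rewrite exprMn; case: (eta_pm1 a_nz) => ->; case: (eta_pm1 b_nz) => ->.
by rewrite exprMn !eta_euler // intrM.
Qed.

Lemma eta_inv (a : F) : eta a^-1 = eta a.
Proof.
have [->|a_nz] := eqVneq a 0; first by rewrite invr0.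
have -> : a^-1 = a * a^-1 ^+ 2 by rewrite expr2 mulrA mulfV ?mul1r.
by rewrite eta_mul eta_sqr ?invr_neq0 ?mulr1.
Qed.

Lemma eta_N1 : eta (-1 : F) = (-1) ^+ (#|F|.-1)./2.
Proof.
apply: eta_eulerP; first by rewrite oppr_eq0 oner_eq0.
  by rewrite -signr_odd sqrr_sign.
by rewrite rmorphXn /= rmorphN1.
Qed.

Lemma eta_N1_exp n : eta (-1 : F) ^+ n = (-1) ^+ (odd (#|F|.-1)./2 && odd n).
Proof. by rewrite eta_N1 -exprM -[LHS]signr_odd oddM. Qed.

Lemma card_sqrt (a : F) : #|[set x : F | x ^+ 2 == a]|%:Z = 1 + eta a.
Proof.
have [->|a_nz] := eqVneq a 0.
  rewrite eta0 addr0 (_ : [set x | _] = [set 0]) ?cards1 //.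
  by apply/setP => x; rewrite !inE sqrf_eq0.
rewrite /eta (negbTE a_nz); case: existsP => [[b /eqP b2] | not_sq].
  have b_nz : b != 0 by apply: contraNneq a_nz => b0; rewrite -b2 b0 expr0n.
  rewrite (_ : [set x | _] = [set b; -b]).
    rewrite cards2 (_ : b != - b) //; apply: contra b_nz => /eqP bNb.
    have : 2%:R * b == 0 by rewrite mulr2n mulrDl mul1r {2}bNb subrr.
    by rewrite mulf_eq0 (negbTE natr2_neq0).
  apply/setP => x; rewrite !inE -b2 -subr_eq0 subr_sqr mulf_eq0 subr_eq0.
  by rewrite addr_eq0.
rewrite (_ : [set x | _] = set0) ?cards0 //.
by apply/setP => x; rewrite !inE; apply/negP => x2; apply: not_sq; exists x.
Qed.

Lemma sum_sqr (R : ringType) (f : F -> R) :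
  \sum_x f (x ^+ 2) = \sum_a (1 + eta a)%:~R * f a.
Proof.
rewrite (partition_big (fun x => x ^+ 2) predT) //=; apply: eq_bigr => a _.
rewrite -card_sqrt -pmulrn mulr_natl -sumr_const.
by apply: eq_big => [x | x /eqP->]; rewrite ?inE.
Qed.

Lemma sum_eta : \sum_(a : F) eta a = 0.
Proof.
have := sum_sqr (fun _ : F => 1 : int); under [in RHS]eq_bigr do rewrite mulr1 intz.
by rewrite big_split /= => /eqP; rewrite -subr_eq0 opprD addrA subrr add0r oppr_eq0 => /eqP.
Qed.

End QuadraticCharacter.

Section SQWeight.
Variable F : finFieldType.

(* The two forms of SQweight_eta: the second counts SQ(A), the first is what
   Fourier inversion reproduces (see pairsum_SQweight). *)
Definition SQweight (t : F) : int := 1 + #|F|%:R * (eta t - (t == 0)%:R).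

Lemma SQweight_eta (t : F) :
  SQweight t = 2%:R * #|F|%:R * (eta t == 1)%:R - (#|F|%:R - 1).
Proof.
by rewrite /SQweight; have [->|/eta_pm1[]->] := eqVneq t 0; rewrite ?eta0 /=; lia.
Qed.

Lemma SQweight_ge (t : F) : 1 - #|F|%:R <= SQweight t.
Proof. by rewrite SQweight_eta; case: (_ == 1) => /=; lia. Qed.

Lemma SQweight_le (t : F) : SQweight t <= 1 + #|F|%:R.
Proof. by rewrite SQweight_eta; case: (_ == 1) => /=; lia. Qed.

Lemma SQweightE (R : ringType) (t : F) :
  (SQweight t)%:~R = 1 + #|F|%:R * ((eta t)%:~R - (t == 0)%:R) :> R.
Proof. by rewrite /SQweight intrD intrM intrB !mulrz_nat. Qed.

Lemma SQweight0 : SQweight 0 = 1 - #|F|%:R.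
Proof. by rewrite /SQweight eta0 eqxx /=; lia. Qed.

End SQWeight.

(* psi x = w ^+ (first coordinate of x), for F ~ 'F_p ^ n and w a primitive
   root of unity of order #|'F_p|. *)
Lemma finField_addchar_exists (F : finFieldType) :
  exists psi : F -> algC,
    [/\ {morph psi : x y / x + y >-> x * y}, psi 0 = 1,
        exists b, psi b != 1 & forall x, (psi x)^* = psi (- x)].
Proof.
have [p _ pchar_p] := finPcharP F.
have [v2r v2r_lin [r2v v2rK r2vK]] := pprimeChar_vectAxiom pchar_p.
set n := logn p _ in v2r v2r_lin v2rK r2vK.
have v2rD : {morph v2r : x y / x + y}.
  by move=> x y; rewrite -[x in LHS]scale1r v2r_lin scale1r.
have n_gt0 : (0 < n)%N.
  have cardF : #|F| = (p ^ n)%N := card_pprimeChar pchar_p.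
  by rewrite lt0n; apply: contraTneq (finNzRing_gt1 F) => n0; rewrite cardF n0.
have [w w_prim] := C_prim_root_exists (ltn0Sn (Zp_trunc (pdiv p)).+1).
pose psi (x : F) := w ^+ v2r x 0 (Ordinal n_gt0).
have psiD : {morph psi : x y / x + y >-> x * y}.
  by move=> x y; rewrite /psi -exprD v2rD mxE -(prim_expr_mod w_prim (_ + _)%N).
have psi0 : psi 0 = 1.
  suff v2r0 : v2r 0 = 0 by rewrite /psi v2r0 mxE.
  by apply: (addrI (v2r 0)); rewrite -v2rD !addr0.
have psi_norm x : `|psi x| = 1.
  apply/eqP; rewrite -(pexpr_eq1 (n := (Zp_trunc (pdiv p)).+2)) //.
  by rewrite -normrX /psi -exprM mulnC exprM (prim_expr_order w_prim) expr1n normr1.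
exists psi; split=> // [|x].
  exists (r2v (const_mx 1)); rewrite /psi r2vK mxE /= modn_small //.
  by rewrite -[X in _ != X](expr0 w) (eq_prim_root_expr w_prim) mod0n modn_small.
have psi_nz : psi x != 0 by rewrite -normr_eq0 psi_norm oner_eq0.
have := invC_norm (psi x); rewrite psi_norm expr1n invr1 mul1r => <-.
by rewrite -[LHS]mulr1 -psi0 -(subrr x) psiD mulKf.
Qed.

Section GaussSum.
Variable F : finFieldType.
Hypothesis oddF : odd #|F|.
Variable psi : F -> algC.
Hypothesis psiD : {morph psi : x y / x + y >-> x * y}.
Hypothesis psi0 : psi 0 = 1.
Hypothesis psi_nontrivial : exists b, psi b != 1.
Hypothesis psiC : forall x, (psi x)^* = psi (- x).

Local Notation etaC a := ((eta a)%:~R : algC).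

Lemma sum_psiM (c : F) : \sum_a psi (c * a) = (c == 0)%:R * #|F|%:R.
Proof.
have [->|c_nz] := eqVneq c 0.
  by under eq_bigr do rewrite mul0r psi0; rewrite sumr_const mul1r.
rewrite (reindex_inj (mulfI (invr_neq0 c_nz))) /= mul0r.
under eq_bigr do rewrite mulVKf //.
have [b psib] := psi_nontrivial.
have : \sum_a psi a = psi b * \sum_a psi a.
  by rewrite {1}(reindex_inj (addrI b)) mulr_sumr /=; under eq_bigr do rewrite psiD.
move/eqP; rewrite -subr_eq0 -{1}[\sum_a _]mul1r -mulrBl mulf_eq0 subr_eq0.
by rewrite eq_sym (negbTE psib) => /eqP.
Qed.

Lemma sum_psiM_nonzero (c : F) :
  \sum_a (a != 0)%:R * psi (c * a) = (c == 0)%:R * #|F|%:R - 1.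
Proof.
rewrite -sum_psiM (bigD1 0) //= eqxx mul0r add0r [in RHS](bigD1 0) //= mulr0 psi0.
rewrite addrAC subrr add0r; apply: eq_bigr => a /negbTE a_nz.
by rewrite a_nz mul1r.
Qed.

Definition gauss := \sum_a etaC a * psi a.

Lemma gaussZ (s : F) : \sum_a etaC a * psi (s * a) = etaC s * gauss.
Proof.
have [->|s_nz] := eqVneq s 0.
  under eq_bigr do rewrite mul0r psi0 mulr1.
  by rewrite -rmorph_sum /= sum_eta // eta0 mul0r.
rewrite (reindex_inj (mulfI (invr_neq0 s_nz))) /= /gauss mulr_sumr.
by apply: eq_bigr => a _; rewrite mulVKf // (eta_mul oddF) (eta_inv oddF) intrM mulrA.
Qed.

Lemma conj_gauss : gauss^* = \sum_a etaC a * psi (- a).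
Proof.
by rewrite rmorph_sum; apply: eq_bigr => a _; rewrite rmorphM /= rmorph_int psiC.
Qed.

Lemma gauss_mul_conj : gauss * gauss^* = #|F|%:R.
Proof.
have expand b : etaC b * psi (- b) * gauss = \sum_a etaC a * psi ((a - 1) * b).
  rewrite mulrAC -gaussZ mulr_suml; apply: eq_bigr => a _.
  by rewrite -mulrA -psiD; congr (_ * psi _); ring.
rewrite mulrC conj_gauss mulr_suml; under eq_bigr do rewrite expand.
rewrite exchange_big /=; under eq_bigr do rewrite -mulr_sumr sum_psiM subr_eq0.
rewrite (bigD1 1) //= eqxx eta1 rmorph1 !mul1r big1 ?addr0 // => a /negbTE->.
by rewrite mul0r mulr0.
Qed.

Lemma gauss_sqr : gauss ^+ 2 = etaC (-1 : F) * #|F|%:R.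
Proof.
have etaN1_sqr : etaC (-1 : F) * etaC (-1 : F) = 1.
  by rewrite -intrM -eta_mul // mulrNN mulr1 eta1.
rewrite -gauss_mul_conj conj_gauss.
under eq_bigr do rewrite -mulN1r.
by rewrite gaussZ [gauss * _]mulrCA !mulrA etaN1_sqr mul1r expr2.
Qed.

Lemma gauss_neq0 : gauss != 0.
Proof.
apply: contra_eq_neq gauss_mul_conj => ->; rewrite mul0r eq_sym pnatr_eq0.
by rewrite -lt0n ltnW // card_finField_gt1.
Qed.

Lemma sum_psi_sqr (s : F) : s != 0 -> \sum_x psi (s * x ^+ 2) = etaC s * gauss.
Proof.
move=> s_nz; rewrite (sum_sqr oddF (fun a => psi (s * a))).
under eq_bigr do rewrite intrD mulrDl mul1r.
by rewrite big_split /= sum_psiM (negbTE s_nz) mul0r add0r gaussZ.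
Qed.

Lemma sum_psi_quadratic (s c : F) : s != 0 ->
  \sum_x psi (s * x ^+ 2 + c * x) = etaC s * gauss * psi (- (c ^+ 2 / (4%:R * s))).
Proof.
move=> s_nz; have two_nz := natr2_neq0 oddF.
have four_nz := natr4_neq0 oddF.
pose t := c / (2%:R * s).
have complete_sqr x : s * (x - t) ^+ 2 + c * (x - t) = s * x ^+ 2 - c ^+ 2 / (4%:R * s).
  by rewrite /t; field; rewrite s_nz two_nz four_nz.
rewrite (reindex_inj (addIr (- t))) /=.
by under eq_bigr do rewrite complete_sqr psiD; rewrite -mulr_suml sum_psi_sqr.
Qed.

Variable d : nat.
Implicit Types m v x y : 'rV[F]_d.

Definition dotr m x : F := \sum_i m 0 i * x 0 i.
Definition sqnorm x : F := \sum_i x 0 i ^+ 2.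

Lemma qdistE x y : qdist x y = sqnorm (x - y).
Proof. by apply: eq_bigr => i _; rewrite !mxE. Qed.

Lemma sqnorm0 : sqnorm 0 = 0.
Proof. by rewrite /sqnorm big1 // => i _; rewrite mxE expr0n. Qed.

Lemma dotr0l x : dotr 0 x = 0.
Proof. by rewrite /dotr big1 // => i _; rewrite mxE mul0r. Qed.

Lemma dotrBr m x y : dotr m (x - y) = dotr m x - dotr m y.
Proof. by rewrite /dotr -sumrB; apply: eq_bigr => i _; rewrite !mxE mulrBr. Qed.

Lemma psi_sum (I : Type) (r : seq I) (P : pred I) (f : I -> F) :
  psi (\sum_(i <- r | P i) f i) = \prod_(i <- r | P i) psi (f i).
Proof. exact: (big_morph psi psiD psi0). Qed.

Lemma sum_rV_prod (h : 'I_d -> F -> algC) :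
  \sum_(m : 'rV[F]_d) \prod_i h i (m 0 i) = \prod_i \sum_a h i a.
Proof.
rewrite bigA_distr_bigA /= (reindex (fun f : {ffun 'I_d -> F} => \row_i f i)) /=.
  by apply: eq_bigr => f _; apply: eq_bigr => i _; rewrite mxE.
exists (fun m => [ffun i => m 0 i]) => [f _ | m _].
  by apply/ffunP => i; rewrite ffunE mxE.
by apply/rowP => i; rewrite mxE ffunE.
Qed.

Lemma sum_psi_dotr v : \sum_(m : 'rV[F]_d) psi (dotr m v) = (v == 0)%:R * (#|F| ^ d)%:R.
Proof.
under eq_bigr do rewrite psi_sum.
rewrite (sum_rV_prod (fun i a => psi (a * v 0 i))).
under eq_bigr do (under eq_bigr do rewrite mulrC; rewrite sum_psiM).
have [->|v_nz] := eqVneq v 0.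
  under eq_bigr do rewrite mxE eqxx mul1r.
  by rewrite prodr_const card_ord natrX mul1r.
have /existsP[i vi_nz] : [exists i, v 0 i != 0].
  apply: contraR v_nz; rewrite negb_exists => /forallP v0.
  by apply/eqP/rowP => i; rewrite mxE; apply/eqP/negPn/v0.
by rewrite mul0r (bigD1 i) //= (negbTE vi_nz) !mul0r.
Qed.

Lemma sum_psi_quadratic_rV (r : F) v : r != 0 ->
  \sum_(m : 'rV[F]_d) psi (r * sqnorm m + dotr m v) =
  (etaC r * gauss) ^+ d * psi (- (sqnorm v / (4%:R * r))).
Proof.
move=> r_nz.
have coordwise m : r * sqnorm m + dotr m v = \sum_i (r * m 0 i ^+ 2 + v 0 i * m 0 i).
  by rewrite big_split /= mulr_sumr; congr (_ + _); apply: eq_bigr => i _; rewrite mulrC.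
under eq_bigr do rewrite coordwise psi_sum.
rewrite (sum_rV_prod (fun i a => psi (r * a ^+ 2 + v 0 i * a))).
under eq_bigr do rewrite sum_psi_quadratic //.
by rewrite big_split /= prodr_const card_ord -psi_sum /sqnorm mulr_suml -sumrN.
Qed.

Variable A : {set 'rV[F]_d}.

Definition fourier m : algC := \sum_(x in A) psi (dotr m x).

Definition pairsum (f : F -> algC) : algC :=
  \sum_(p in setX A A) f (qdist p.1 p.2).

Lemma sqr_norm_fourier m :
  `|fourier m| ^+ 2 = \sum_(p in setX A A) psi (dotr m (p.1 - p.2)).
Proof.
rewrite normCK /fourier rmorph_sum /= big_distrlr /=.
rewrite pair_big; apply: eq_big => [p | p _]; first by rewrite inE.
by rewrite psiC dotrBr -psiD.
Qed.

Lemma sqr_norm_fourier0 : `|fourier 0| ^+ 2 = (#|A| ^ 2)%:R.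
Proof.
rewrite /fourier; under eq_bigr do rewrite dotr0l psi0.
by rewrite sumr_const normr_nat natrX.
Qed.

Lemma sum_sqr_norm_fourier :
  \sum_(m : 'rV[F]_d) `|fourier m| ^+ 2 = (#|F| ^ d * #|A|)%:R.
Proof.
under eq_bigr do rewrite sqr_norm_fourier.
rewrite exchange_big /=; under eq_bigr do rewrite sum_psi_dotr subr_eq0.
by rewrite sum_setX_diag natrM mulrC.
Qed.

Lemma eq_pairsum (f g : F -> algC) : f =1 g -> pairsum f = pairsum g.
Proof. by move=> fg; apply: eq_bigr => p _. Qed.

Lemma pairsum_psi (u : F) : u != 0 -> ~~ odd d ->
  gauss ^+ d * pairsum (fun t => psi (u^-1 * t)) =
  \sum_(m : 'rV[F]_d) psi (- (u / 4%:R) * sqnorm m) * `|fourier m| ^+ 2.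
Proof.
move=> u_nz d_even; have four_nz := natr4_neq0 oddF.
set r := - (u / 4%:R); have r_nz : r != 0 by rewrite oppr_eq0 mulf_neq0 ?invr_neq0.
have gauss_d : gauss ^+ d = (etaC r * gauss) ^+ d.
  by rewrite exprMn -rmorphXn /= eta_exp_even // rmorph1 mul1r.
have expand p : gauss ^+ d * psi (u^-1 * qdist p.1 p.2) =
    \sum_(m : 'rV[F]_d) psi (r * sqnorm m) * psi (dotr m (p.1 - p.2)).
  rewrite gauss_d qdistE (_ : u^-1 * _ = - (sqnorm (p.1 - p.2) / (4%:R * r))).
    by rewrite -sum_psi_quadratic_rV //; apply: eq_bigr => m _; exact: psiD.
  by rewrite /r; field; rewrite oppr_eq0 u_nz four_nz.
rewrite /pairsum [gauss ^+ d * _]mulr_sumr; under eq_bigr do rewrite expand.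
rewrite exchange_big /=; apply: eq_bigr => m _.
by rewrite sqr_norm_fourier [psi _ * _]mulr_sumr.
Qed.

(* Expanding the weight in the characters psi (t / u) makes the dual side linear
   in u; the term u = 0 must vanish since there 0^-1 = 0 and psi (0 * t) = 1. *)
Lemma pairsum_fourier (c : F -> algC) : ~~ odd d -> c 0 = 0 ->
  gauss ^+ d * pairsum (fun t => \sum_u c u * psi (u^-1 * t)) =
  \sum_(m : 'rV[F]_d) (\sum_u c u * psi (- (u / 4%:R) * sqnorm m)) * `|fourier m| ^+ 2.
Proof.
move=> d_even c0.
have -> : pairsum (fun t => \sum_u c u * psi (u^-1 * t)) =
    \sum_u c u * pairsum (fun t => psi (u^-1 * t)).
  by rewrite /pairsum exchange_big; apply: eq_bigr => u _; rewrite mulr_sumr.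
rewrite [gauss ^+ d * _]mulr_sumr (bigD1 0) //= c0 mul0r mulr0 add0r.
under eq_bigr => u u_nz do rewrite mulrCA pairsum_psi // mulr_sumr.
rewrite exchange_big /=; apply: eq_bigr => m _.
rewrite mulr_suml [RHS](bigD1 0) //= c0 !mul0r add0r.
by apply: eq_bigr => u _; rewrite mulrA.
Qed.

Lemma sum_eta_psi_inv (t : F) : \sum_u etaC u * psi (u^-1 * t) = etaC t * gauss.
Proof.
rewrite -gaussZ (reindex_inj invr_inj) /=.
by apply: eq_bigr => u _; rewrite eta_inv // invrK [u * t]mulrC.
Qed.

Lemma sum_eta_psi_quarter (n : F) :
  \sum_u etaC u * psi (- (u / 4%:R) * n) = etaC (- n) * gauss.
Proof.
have -> : eta (- n) = eta (- n / 4%:R) by rewrite eta_mul // eta_inv // eta_natr4 // mulr1.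
by rewrite -gaussZ; apply: eq_bigr => u _; congr (_ * psi _); ring.
Qed.

Lemma sum_nonzero_psi_inv (t : F) :
  \sum_u (u != 0)%:R * psi (u^-1 * t) = (t == 0)%:R * #|F|%:R - 1.
Proof.
rewrite -sum_psiM_nonzero (reindex_inj invr_inj) /=.
by apply: eq_bigr => u _; rewrite invr_eq0 invrK [u * t]mulrC.
Qed.

Lemma sum_nonzero_psi_quarter (n : F) :
  \sum_u (u != 0)%:R * psi (- (u / 4%:R) * n) = (n == 0)%:R * #|F|%:R - 1.
Proof.
have -> : (n == 0) = (- n / 4%:R == 0).
  by rewrite mulf_eq0 invr_eq0 (negbTE (natr4_neq0 oddF)) orbF oppr_eq0.
by rewrite -sum_psiM_nonzero; apply: eq_bigr => u _; congr (_ * psi _); ring.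
Qed.

Lemma pairsum_eta : ~~ odd d ->
  gauss ^+ d * pairsum (fun t => etaC t) =
  \sum_(m : 'rV[F]_d) etaC (- sqnorm m) * `|fourier m| ^+ 2.
Proof.
move=> d_even; have G_nz := gauss_neq0.
have etaE t : etaC t = \sum_u etaC u / gauss * psi (u^-1 * t).
  rewrite -[LHS](mulfK G_nz) -sum_eta_psi_inv mulr_suml.
  by apply: eq_bigr => u _; rewrite mulrAC.
rewrite (eq_pairsum etaE) pairsum_fourier ?eta0 ?mul0r //.
apply: eq_bigr => m _; congr (_ * _).
by under eq_bigr do rewrite mulrAC; rewrite -mulr_suml sum_eta_psi_quarter mulfK.
Qed.

Lemma pairsum_SQweight : ~~ odd d ->
  gauss ^+ d * pairsum (fun t => (SQweight t)%:~R) =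
  \sum_(m : 'rV[F]_d) (SQweight (- sqnorm m))%:~R * `|fourier m| ^+ 2.
Proof.
move=> d_even; have G_nz := gauss_neq0.
pose c (u : F) : algC := #|F|%:R / gauss * etaC u - (u != 0)%:R.
have sum_c (f : F -> F) : \sum_u c u * psi (f u) =
    #|F|%:R / gauss * \sum_u etaC u * psi (f u) - \sum_u (u != 0)%:R * psi (f u).
  by rewrite mulr_sumr -sumrB; apply: eq_bigr => u _; rewrite mulrBl mulrA.
have castE (t : F) : (SQweight t)%:~R =
    #|F|%:R / gauss * (etaC t * gauss) - ((t == 0)%:R * #|F|%:R - 1).
  by rewrite SQweightE; field.
have weightE (t : F) : (SQweight t)%:~R = \sum_u c u * psi (u^-1 * t).
  by rewrite sum_c sum_eta_psi_inv sum_nonzero_psi_inv castE.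
rewrite (eq_pairsum weightE) pairsum_fourier //; last by rewrite /c eta0 eqxx mulr0 subr0.
apply: eq_bigr => m _; congr (_ * _).
by rewrite sum_c sum_eta_psi_quarter sum_nonzero_psi_quarter castE oppr_eq0.
Qed.

Lemma pairsum1 : pairsum (fun=> 1) = (#|A| ^ 2)%:R.
Proof. by rewrite /pairsum sumr_const cardsX mulnn. Qed.

Lemma SQ_pairsum : (SQ A)%:R = pairsum (fun t => (eta t == 1)%:R).
Proof.
rewrite /SQ -sumr_const /pairsum big_mkcond [RHS]big_mkcond /=.
by apply: eq_bigr => p _; rewrite !inE; case: (p.1 \in A); case: (p.2 \in A); case: (_ == 1).
Qed.

Lemma pairsum_SQweight_SQ : pairsum (fun t => (SQweight t)%:~R) =
  2%:R * #|F|%:R * (SQ A)%:R - (#|F|%:R - 1) * (#|A| ^ 2)%:R.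
Proof.
rewrite SQ_pairsum -pairsum1 /pairsum !mulr_sumr -sumrB; apply: eq_bigr => p _.
by rewrite SQweight_eta !(rmorphB, rmorphM, rmorph_nat, rmorph1) /= mulr1.
Qed.

Lemma gauss_exp_even : ~~ odd d ->
  gauss ^+ d = (eta (-1 : F) ^+ d./2)%:~R * #|F|%:R ^+ d./2.
Proof.
move=> d_even; rewrite -{1}[d]odd_double_half (negbTE d_even) add0n -mul2n.
by rewrite exprM gauss_sqr exprMn rmorphXn.
Qed.

Lemma SQ_fourier : ~~ odd d ->
  2%:R * #|F|%:R * #|F|%:R ^+ d./2 * (SQ A)%:R =
  (#|F|%:R - 1) * #|F|%:R ^+ d./2 * #|A|%:R ^+ 2 +
  (eta (-1 : F) ^+ d./2)%:~R *
    \sum_(m : 'rV[F]_d) (SQweight (- sqnorm m))%:~R * `|fourier m| ^+ 2.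
Proof.
move=> d_even; rewrite -pairsum_SQweight // gauss_exp_even // pairsum_SQweight_SQ natrX.
set e := (eta (-1 : F) ^+ d./2)%:~R.
have e2 : e * e = 1.
  by rewrite /e -intrM -exprD addnn eta_exp_even ?odd_double ?oppr_eq0 ?oner_eq0.
by rewrite !mulrA e2 mul1r; ring.
Qed.

Lemma sum_fourier_le (c : 'rV[F]_d -> int) (a b : int) :
    (forall m, c m <= a + b * (m == 0)) ->
  \sum_(m : 'rV[F]_d) (c m)%:~R * `|fourier m| ^+ 2 <=
  a%:~R * (#|F| ^ d * #|A|)%:R + b%:~R * (#|A| ^ 2)%:R.
Proof.
move=> c_le.
have -> : a%:~R * (#|F| ^ d * #|A|)%:R + b%:~R * (#|A| ^ 2)%:R =
    \sum_(m : 'rV[F]_d) (a + b * (m == 0))%:~R * `|fourier m| ^+ 2.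
  under eq_bigr do rewrite intrD intrM mulrDl -mulrA.
  rewrite big_split /= -!mulr_sumr sum_sqr_norm_fourier (bigD1 0) //= big1 ?addr0.
    by rewrite sqr_norm_fourier0 eqxx mulr1z mul1r.
  by move=> m /negbTE->; rewrite mul0r.
by apply: ler_sum => m _; apply: ler_wpM2r; rewrite ?exprn_ge0 ?ler_int.
Qed.

Lemma SQ_le_pairsum_eta :
  2%:R * (SQ A)%:R + #|A|%:R <= (#|A| ^ 2)%:R + pairsum (fun t => etaC t).
Proof.
rewrite SQ_pairsum -pairsum1 -[#|A|%:R]mulr1 -sum_setX_diag /pairsum mulr_sumr.
rewrite -!big_split /=; apply: ler_sum => p _; rewrite mulr1.
have [-> | _] := eqVneq p.1 p.2.
  by rewrite qdistE subrr sqnorm0 eta0 /= mulr0 add0r addr0.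
have [->|/eta_pm1[]->] := eqVneq (qdist p.1 p.2) 0;
  by rewrite ?eta0 /= ?addr0 ?mulr0 ?mulr1 ?mulr1z ?mulrN1z ?subrr ?ler01.
Qed.

End GaussSum.

Section SQBounds.
Variable F : finFieldType.
Hypothesis oddF : odd #|F|.
Variable d : nat.
Hypothesis d_even : ~~ odd d.
Variable A : {set 'rV[F]_d}.

Lemma SQ_bound_neg : eta (-1 : F) ^+ d./2 = -1 ->
  (2 * #|F| * #|F| ^ d./2 * SQ A <=
   (#|F| - 1) * #|F| ^ d./2 * #|A| ^ 2 + (#|F| - 1) * (#|F| ^ d./2) ^ 2 * #|A|)%N.
Proof.
move=> eps; have [psi [psiD psi0 psi_nt psiC]] := finField_addchar_exists F.
have q_gt0 : (0 < #|F|)%N by apply: ltnW (card_finField_gt1 F).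
rewrite -(ler_nat algC) !(natrD, natrX, natrM) natrB // mulr1n.
rewrite (SQ_fourier oddF psiD psi0 psi_nt psiC A d_even).
rewrite eps rmorphN1 mulN1r lerD2l -sumrN.
under eq_bigr do rewrite -mulNr -intrN.
apply: le_trans (sum_fourier_le psiD psi0 psi_nt psiC A (a := #|F|%:R - 1) (b := 0) _) _.
  by move=> m; have := SQweight_ge (- sqnorm m); lia.
by rewrite mul0r addr0 expn_even_half // !(natrX, natrM) mulrA intrB rmorph_nat rmorph1.
Qed.

Lemma SQ_bound_pos_large : eta (-1 : F) ^+ d./2 = 1 ->
  (2 * #|F| * #|F| ^ d./2 * SQ A + 2 * #|F| * #|A| ^ 2 <=
   (#|F| - 1) * #|F| ^ d./2 * #|A| ^ 2 + (#|F| + 1) * (#|F| ^ d./2) ^ 2 * #|A|)%N.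
Proof.
move=> eps; have [psi [psiD psi0 psi_nt psiC]] := finField_addchar_exists F.
have q_gt0 : (0 < #|F|)%N by apply: ltnW (card_finField_gt1 F).
rewrite -(ler_nat algC) !(natrD, natrX, natrM) natrB // mulr1n.
rewrite (SQ_fourier oddF psiD psi0 psi_nt psiC A d_even) eps mul1r -addrA lerD2l -lerBrDr.
apply: le_trans (sum_fourier_le psiD psi0 psi_nt psiC A
  (a := #|F|%:R + 1) (b := - (2%:R * #|F|%:R)) _) _.
  move=> m; have [->|_] := eqVneq m 0; first by rewrite sqnorm0 oppr0 SQweight0; lia.
  by have := SQweight_le (- sqnorm m); lia.
rewrite expn_even_half // !(natrX, natrM) mulrA.
by rewrite !(rmorphD, rmorphN, rmorphM, rmorph_nat, rmorph1) mulNr.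
Qed.

Lemma SQ_bound_pos_small : eta (-1 : F) ^+ d./2 = 1 ->
  (2 * #|F| ^ d./2 * SQ A + #|F| ^ d./2 * #|A| + #|A| ^ 2 <=
   #|F| ^ d./2 * #|A| ^ 2 + (#|F| ^ d./2) ^ 2 * #|A|)%N.
Proof.
move=> eps; have [psi [psiD psi0 psi_nt psiC]] := finField_addchar_exists F.
have := pairsum_eta oddF psiD psi0 psi_nt psiC A d_even.
rewrite (gauss_exp_even oddF psiD psi0 psi_nt psiC d_even) eps mul1r => Sf_eq.
rewrite -(ler_nat algC) !(natrD, natrX, natrM).
set h := #|F|%:R ^+ d./2; set Sf := pairsum A _ in Sf_eq.
have h_ge0 : 0 <= h by rewrite exprn_ge0 ?ler0n.
have Sf_le : h * Sf <= h ^+ 2 * #|A|%:R - #|A|%:R ^+ 2.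
  rewrite Sf_eq; apply: le_trans (sum_fourier_le psiD psi0 psi_nt psiC A
    (c := fun m => eta (- sqnorm m)) (a := 1) (b := -1) _) _.
    move=> m; have [->|_] := eqVneq m 0; first by rewrite sqnorm0 oppr0 eta0.
    by have := eta_range (- sqnorm m); lia.
  by rewrite expn_even_half // !(natrX, natrM) rmorph1 mul1r mulN1r.
have SQ_le := SQ_le_pairsum_eta A; rewrite -/Sf -subr_ge0 in SQ_le.
rewrite -subr_ge0 (_ : _ - _ = h * ((#|A| ^ 2)%:R + Sf - (2%:R * (SQ A)%:R + #|A|%:R))
  + (h ^+ 2 * #|A|%:R - #|A|%:R ^+ 2 - h * Sf)); last by rewrite natrX; ring.
by apply: addr_ge0; [exact: mulr_ge0 | rewrite subr_ge0].
Qed.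

End SQBounds.

Section RationalForm.
Variables (R : numFieldType) (q e N S : nat).
Hypothesis q_gt0 : (0 < q)%N.

Lemma rearrange_bound_neg :
  (2 * q * q ^ e.+1 * S <= (q - 1) * q ^ e.+1 * N ^ 2 + (q - 1) * (q ^ e.+1) ^ 2 * N)%N ->
  S%:R <= N%:R ^+ 2 / 2 + q%:R ^+ e.+1 * N%:R / 2 - N%:R ^+ 2 / (2 * q%:R)
          - q%:R ^+ e * N%:R / 2 :> R.
Proof.
rewrite -(ler_nat R) -subr_ge0 !(natrD, natrX, natrM) natrB // mulr1n.
have q_nz : q%:R != 0 :> R by rewrite pnatr_eq0 -lt0n.
set D := _ - _ => D_ge0.
rewrite -subr_ge0 (_ : _ - _ = D / (2 * q%:R * q%:R ^+ e.+1)).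
  by rewrite divr_ge0 // ltW // !mulr_gt0 ?exprn_gt0 ?ltr0n.
by rewrite /D !exprS; field; rewrite q_nz expf_neq0.
Qed.

Lemma rearrange_bound_pos_large :
  (2 * q * q ^ e.+1 * S + 2 * q * N ^ 2 <=
   (q - 1) * q ^ e.+1 * N ^ 2 + (q + 1) * (q ^ e.+1) ^ 2 * N)%N ->
  S%:R <= N%:R ^+ 2 / 2 + q%:R ^+ e.+1 * N%:R / 2 - N%:R ^+ 2 / q%:R ^+ e.+1
          - N%:R ^+ 2 / (2 * q%:R) + q%:R ^+ e * N%:R / 2 :> R.
Proof.
rewrite -(ler_nat R) -subr_ge0 !(natrD, natrX, natrM) natrB // mulr1n.
have q_nz : q%:R != 0 :> R by rewrite pnatr_eq0 -lt0n.
set D := _ - _ => D_ge0.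
rewrite -subr_ge0 (_ : _ - _ = D / (2 * q%:R * q%:R ^+ e.+1)).
  by rewrite divr_ge0 // ltW // !mulr_gt0 ?exprn_gt0 ?ltr0n.
by rewrite /D !exprS; field; rewrite q_nz expf_neq0.
Qed.

Lemma rearrange_bound_pos_small :
  (2 * q ^ e.+1 * S + q ^ e.+1 * N + N ^ 2 <= q ^ e.+1 * N ^ 2 + (q ^ e.+1) ^ 2 * N)%N ->
  S%:R <= N%:R ^+ 2 / 2 + q%:R ^+ e.+1 * N%:R / 2 - N%:R ^+ 2 / (2 * q%:R ^+ e.+1)
          - N%:R / 2 :> R.
Proof.
rewrite -(ler_nat R) -subr_ge0 !(natrD, natrX, natrM).
have q_nz : q%:R != 0 :> R by rewrite pnatr_eq0 -lt0n.
set D := _ - _ => D_ge0.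
rewrite -subr_ge0 (_ : _ - _ = D / (2 * q%:R ^+ e.+1)).
  by rewrite divr_ge0 // ltW // !mulr_gt0 ?exprn_gt0 ?ltr0n.
by rewrite /D !exprS; field; rewrite q_nz expf_neq0.
Qed.

End RationalForm.

Theorem theorem1p5 (F : finFieldType) (d : nat) (A : {set 'rV[F]_d}) :
  odd #|F| -> (0 < d)%N ->
  (((d %% 4 == 2)%N && (#|F| %% 4 == 3)%N) ->
     (SQ A)%:R <= (#|A|%:R ^+ 2 / 2 + (#|F|%:R ^+ (d./2)) * #|A|%:R / 2
                   - #|A|%:R ^+ 2 / (2 * #|F|%:R)
                   - (#|F|%:R ^+ ((d - 2)./2)) * #|A|%:R / 2 : rat)) /\
  (((d %% 4 == 0)%N || ((d %% 4 == 2)%N && (#|F| %% 4 == 1)%N)) ->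
     ((((#|F|%:R ^+ (d./2) + #|F|%:R) / (1 + (#|F|%:R ^+ ((d - 2)./2))^-1) : rat)
          <= #|A|%:R ->
       (SQ A)%:R <= (#|A|%:R ^+ 2 / 2 + (#|F|%:R ^+ (d./2)) * #|A|%:R / 2
                     - #|A|%:R ^+ 2 / (#|F|%:R ^+ (d./2))
                     - #|A|%:R ^+ 2 / (2 * #|F|%:R)
                     + (#|F|%:R ^+ ((d - 2)./2)) * #|A|%:R / 2 : rat)) /\
      (#|A|%:R <= ((#|F|%:R ^+ (d./2) + #|F|%:R) / (1 + (#|F|%:R ^+ ((d - 2)./2))^-1) : rat) ->
       (SQ A)%:R <= (#|A|%:R ^+ 2 / 2 + (#|F|%:R ^+ (d./2)) * #|A|%:R / 2
                     - #|A|%:R ^+ 2 / (2 * #|F|%:R ^+ (d./2))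
                     - #|A|%:R / 2 : rat)))).
Proof.
move=> oddF d_gt0; have q_gt0 : (0 < #|F|)%N := ltnW (card_finField_gt1 F).
split=> [/andP[/eqP d4 /eqP q4] | d_q].
  have d2 : d./2 = ((d - 2)./2).+1 by lia.
  rewrite d2; apply: rearrange_bound_neg => //; rewrite -d2.
  apply: SQ_bound_neg => //; first by lia.
  by rewrite (eta_N1_exp oddF) (_ : (_ && _) = true) //; apply/andP; split; lia.
have [d_even d2 sign] : [/\ ~~ odd d, d./2 = ((d - 2)./2).+1
    & odd (#|F|.-1)./2 && odd d./2 = false].
  by case/orP: d_q => [/eqP d4 | /andP[/eqP d4 /eqP q4]]; split; lia.
have eps : eta (-1 : F) ^+ d./2 = 1 by rewrite (eta_N1_exp oddF) sign.
(* Both estimates hold for every A; the threshold only tells which is sharper. *)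
rewrite d2; split=> _.
  by apply: rearrange_bound_pos_large => //; rewrite -d2; apply: SQ_bound_pos_large.
by apply: rearrange_bound_pos_small => //; rewrite -d2; apply: SQ_bound_pos_small.
Qed.
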